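(* Let $\mathcal H=(H=A\oplus B,(\cdot,\cdot),x\mapsto x^*,U)$ be a structure algebra. For $a\in A$ let $\phi(a)\in B$ be the unique element with $(\phi(a),b)=(a,b)$ for all $b\in B$. Then $\phi:A\to B$ is an algebra homomorphism from $A$ into the center of $B$, and $ab=\phi(a)b$ for all $a\in A$, $b\in B$.
   Context: All vector spaces are finite-dimensional over $\mathbb C$. For an associative algebra $X$ with a symmetric invariant ($(xy,z)=(x,yz)$) bilinear form nondegenerate on $X$, basis $(e_i)$, Gram matrix $F_{ij}=(e_i,e_j)$ with inverse $(F^{ij})$, put $K_X=\sum F^{ij}e_ie_j$, $V_{K_X}(x)=\sum F^{ij}e_ixe_j$, and for an involutive antiautomorphism $*$ ($(x^* )^*=x$, $(xy)^*=y^*x^*$), $K_{X,*}=\sum F^{ij}e_ie_j^*$. A structure algebra is a tuple $(H=A\oplus B,(\cdot,\cdot),x\mapsto x^*,U)$ where $H$ is a finite-dimensional associative algebra, $H=A\oplus B$ is a decomposition into vector subspaces, $(\cdot,\cdot)$ is a symmetric invariant bilinear form on $H$, $*$ is an involutive antiautomorphism of $H$ and $U\in A$, such that: (1) $A$ is a subalgebra contained in the center of $H$ and its unit $1_A$ is the unit of $H$; (2) $B$ is a two-sided ideal with a unit $1_B$; (3) the restrictions of $(\cdot,\cdot)$ to $A$ and to $B$ are nondegenerate; (4) $(V_{K_B}(b_1),b_2)=\sum_{i,j}F^{ij}(e_i,b_1)(e_j,b_2)$ for all $b_1,b_2\in B$, where $(e_i)$ is a basis of $A$ and $F^{ij}$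 the inverse Gram matrix of $(\cdot,\cdot)|_A$; (5) $A^*=A$, $B^*=B$, $(x^*,y^* )=(x,y)$; (6) $U^2=K_{A,*}$; (7) $(U,b)=(K_{B,*},b)$ for all $b\in B$; (8) $(aU)^*=aU$ for all $a\in A$. (All of $K_A,K_{A,*},V_{K_B},K_{B,*}$ are computed inside $A$ or $B$ with the restricted form and involution.) *)

From HB Require Import structures.
From mathcomp Require Import all_boot all_order all_algebra falgebra.
Set Implicit Arguments. Unset Strict Implicit. Unset Printing Implicit Defensive.
Import GRing.Theory Num.Theory.
Local Open Scope ring_scope.


Section StructureAlgebraDefs.
Variables (C : fieldType) (H : falgType C).

Definition bas (X : {vspace H}) (i : 'I_(\dim X)) : H := tnth (vbasis X) i.

Definition gram (f : H -> H -> C) (X : {vspace H}) : 'M[C]_(\dim X) :=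
  \matrix_(i, j) f (bas i) (bas j).

Definition igram (f : H -> H -> C) (X : {vspace H}) : 'M[C]_(\dim X) :=
  invmx (gram f X).

Definition K_ (f : H -> H -> C) (X : {vspace H}) : H :=
  \sum_(i < \dim X) \sum_(j < \dim X) igram f X i j *: (bas i * bas j).

Definition V_K (f : H -> H -> C) (X : {vspace H}) (x : H) : H :=
  \sum_(i < \dim X) \sum_(j < \dim X) igram f X i j *: (bas i * x * bas j).

Definition K_star (f : H -> H -> C) (star : H -> H) (X : {vspace H}) : H :=
  \sum_(i < \dim X) \sum_(j < \dim X) igram f X i j *: (bas i * star (bas j)).

(* The tuple (H = A (+) B, (.,.), *, U) with unit 1_B = eB is a structure algebra. *)
Definition structure_algebra (A B : {vspace H}) (f : H -> H -> C)
    (star : H -> H) (U eB : H) : Prop :=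
  ((A + B = fullv)%VS /\ (A :&: B = 0)%VS) /\
  [/\ forall x y, f x y = f y x,
      forall k x y z, f (k *: x + y) z = k * f x z + f y z
    & forall x y z, f (x * y) z = f x (y * z)] /\
  [/\ forall k x y, star (k *: x + y) = k *: star x + star y,
      forall x, star (star x) = x
    & forall x y, star (x * y) = star y * star x] /\
  [/\ (1 \in A), (forall a a', a \in A -> a' \in A -> a * a' \in A)
    & forall a x, a \in A -> a * x = x * a] /\
  [/\ forall x b, b \in B -> x * b \in B /\ b * x \in B,
      eB \in B & forall b, b \in B -> eB * b = b /\ b * eB = b] /\
  [/\ forall a, a \in A -> (forall a', a' \in A -> f a a' = 0) -> a = 0
    & forall b, b \in B -> (forall b', b' \in B -> f b b' = 0) -> b = 0] /\
  (forall b1 b2, b1 \in B -> b2 \in B ->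
     f (V_K f B b1) b2 =
     \sum_(i < \dim A) \sum_(j < \dim A)
        igram f A i j * f (bas i) b1 * f (bas j) b2) /\
  [/\ forall a, a \in A -> star a \in A,
      forall b, b \in B -> star b \in B
    & forall x y, f (star x) (star y) = f x y] /\
  [/\ U \in A, U * U = K_star f star A,
      forall b, b \in B -> f U b = f (K_star f star B) b
    & forall a, a \in A -> star (a * U) = a * U].

End StructureAlgebraDefs.

(** Invariance gives (a 1_B, b) = (a, 1_B b) = (a, b) for b in B, and a 1_B
    lies in the ideal B, so nondegeneracy of the form on B forces
    phi(a) = a 1_B.  Since A is central and 1_B is an idempotent acting as the
    identity on B, every claimed property of phi is then a one-line
    computation. *)

From HB Require Import structures.
From mathcomp Require Import all_boot all_order all_algebra falgebra.
Set Implicit Arguments. Unset Strict Implicit. Unset Printing Implicit Defensive.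
Import GRing.Theory Num.Theory.
Local Open Scope ring_scope.

Section LeftLinearForm.
Variables (C : fieldType) (H : lmodType C) (f : H -> H -> C).
Hypothesis f_linear : forall k x y z, f (k *: x + y) z = k * f x z + f y z.

Lemma form0l z : f 0 z = 0.
Proof.
have := f_linear 1 0 0 z; rewrite scale1r addr0 mul1r => f00.
by apply: (@addrI _ (f 0 z)); rewrite addr0 -f00.
Qed.

Lemma formBl x y z : f (x - y) z = f x z - f y z.
Proof.
have := f_linear 1 x (- y) z; have := f_linear (-1) y 0 z.
by rewrite scale1r mul1r scaleN1r !addr0 form0l addr0 mulN1r => -> .
Qed.

End LeftLinearForm.

Section IdealWithUnit.
Variables (C : fieldType) (H : falgType C) (B : {vspace H}) (eB : H).
Hypothesis eB_unit : forall b, b \in B -> eB * b = b /\ b * eB = b.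

Lemma mul_unitl b : b \in B -> eB * b = b.
Proof. by case/eB_unit. Qed.

Lemma mul_unitr b : b \in B -> b * eB = b.
Proof. by case/eB_unit. Qed.

Lemma mul_unit_ideal a b : b \in B -> a * eB * b = a * b.
Proof. by move=> bB; rewrite -mulrA mul_unitl. Qed.

Lemma mul_unit_centralC a b :
  (forall x, a * x = x * a) -> b \in B -> a * eB * b = b * (a * eB).
Proof.
move=> a_central bB.
by rewrite mul_unit_ideal // mulrA -a_central -mulrA mul_unitr.
Qed.

Hypothesis eB_in : eB \in B.

Lemma mul_unit_centralM a a' :
  (forall x, a' * x = x * a') -> a * a' * eB = a * eB * (a' * eB).
Proof.
move=> a'_central; rewrite [in RHS]mulrA -(mulrA a eB a') -(a'_central eB).
by rewrite [in RHS]mulrA -(mulrA (a * a')) mul_unitl.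
Qed.

Variable f : H -> H -> C.
Hypotheses (f_linear : forall k x y z, f (k *: x + y) z = k * f x z + f y z)
           (f_invariant : forall x y z, f (x * y) z = f x (y * z))
           (B_rideal : forall x, x * eB \in B)
           (f_nondegB : forall b, b \in B ->
              (forall b', b' \in B -> f b b' = 0) -> b = 0).

Lemma form_representative_unit a p :
  p \in B -> (forall b, b \in B -> f p b = f a b) -> p = a * eB.
Proof.
move=> pB p_rep; apply/eqP; rewrite -subr_eq0; apply/eqP.
apply: f_nondegB => [|b bB]; first by rewrite memvB.
by rewrite formBl // p_rep // f_invariant mul_unitl // subrr.
Qed.

End IdealWithUnit.

Theorem lemma2p1 (C : numClosedFieldType) (H : falgType C)
    (A B : {vspace H}) (f : H -> H -> C) (star : H -> H) (U eB : H)
    (hH : structure_algebra A B f star U eB)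
    (phi : H -> H)
    (hphi : forall a, a \in A ->
       phi a \in B /\ (forall b, b \in B -> f (phi a) b = f a b)) :
  [/\ (* phi is an algebra homomorphism A -> B (unital: 1_A |-> 1_B) *)
      forall k a a', a \in A -> a' \in A -> phi (k *: a + a') = k *: phi a + phi a',
      forall a a', a \in A -> a' \in A -> phi (a * a') = phi a * phi a',
      phi 1 = eB,
      (* with values in the center of B *)
      forall a b, a \in A -> b \in B -> phi a * b = b * phi a
    & (* a b = phi(a) b *)
      forall a b, a \in A -> b \in B -> a * b = phi a * b].
Proof.
move: hH => [_ [[_ f_linear f_invariant] [_ [[A1 A_mul A_central]
  [[B_ideal eB_in eB_unit] [[_ f_nondegB] _]]]]]].
have phiE a : a \in A -> phi a = a * eB.
  move=> aA; have [phiB phi_rep] := hphi a aA.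
  apply: (form_representative_unit eB_unit f_linear f_invariant _ f_nondegB)
    => // x.
  by case: (B_ideal x eB eB_in).
have central a : a \in A -> forall x, a * x = x * a.
  by move=> aA x; apply: A_central.
split=> [k a a' aA a'A|a a' aA a'A||a b aA bB|a b aA bB].
- by rewrite !phiE ?memvD ?memvZ // mulrDl -scalerAl.
- by rewrite !phiE ?A_mul // (mul_unit_centralM eB_unit eB_in a (central a' a'A)).
- by rewrite phiE // mul1r.
- by rewrite phiE // (mul_unit_centralC eB_unit (central a aA)).
- by rewrite phiE // (mul_unit_ideal eB_unit).
Qed.
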